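(* Let $\kappa:[-1,1]\to\mathbb{R}$ be given by $\kappa(t)=\sum_{q\ge 0}\frac{J_q^2}{q!}t^q$, where $J_q\in\mathbb{R}$, $J_q\neq 0$ for infinitely many $q$, $\sum_{q\ge1}\frac{|J_q|}{(q-1)!}<\infty$ (so that $\kappa\in C^1([-1,1])$), and $\kappa(1)=1$. For $L\ge1$ let $\kappa_L=\kappa\circ\cdots\circ\kappa$ ($L$ times). Assume $\kappa'(1)<1$. Then for every $t\in[-1,1]$ the limit \[ \mathfrak{L}(t)=\lim_{L\to\infty}(\kappa'(1))^{-L}\bigl(1-\kappa_L(t)\bigr) \] exists in $[0,\infty)$. Moreover, if in addition there exist $c\in\mathbb{R}\setminus\{0\}$ and $\rho>1$ such that \[ 1-\kappa(t)=\kappa'(1)(1-t)-c(1-t)^{\rho}+o\bigl((1-t)^{\rho}\bigr)\quad\text{as } t\to1^-, \] then $\mathfrak{L}(t)=0$ if and only if $t\in\mathcal{I}(\kappa):=\{s\in[-1,1]:\kappa(s)=1\}$. *)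

From Stdlib Require Import Reals Factorial.
From Coquelicot Require Import Coquelicot.
Open Scope R_scope.

Definition kappa (J : nat -> R) (t : R) : R :=
  Series (fun q => J q ^ 2 / INR (fact q) * t ^ q).

Definition kappa_iter (J : nat -> R) (L : nat) (t : R) : R :=
  Nat.iter L (kappa J) t.

(* Write kappa s = sum_q a_q s^q with a_q = J_q^2 / q! >= 0 and sum_q a_q = 1.  Since
   (1 - s^q) / (1 - s) is nondecreasing on [0, 1), so is the secant slope
   (1 - kappa s) / (1 - s), whose limit at 1 is kappa'(1); with a direct estimate on [-1, 0]
   this gives 1 - kappa s <= kappa'(1) (1 - s) on [-1, 1].  Hence the rescaled gaps
   kappa'(1)^-L (1 - kappa_L t) are nonnegative and nonincreasing, so they converge.
   If kappa t = 1 the iterates are eventually 1 and the limit is 0.  Otherwise the iterates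
   stay in (-1, 1) with 1 - kappa_L t <= 2 kappa'(1)^L, and the expansion at 1 shows that each
   rescaled gap is at least the previous one times 1 - M theta^L, theta = kappa'(1)^(rho - 1) < 1;
   as sum_L theta^L converges, the product of these factors stays away from 0. *)

From Stdlib Require Import Reals Factorial Lra Lia.
From Coquelicot Require Import Coquelicot.
Open Scope R_scope.

Lemma pow_between_m1_1 (s : R) (q : nat) : -1 <= s <= 1 -> -1 <= s ^ q <= 1.
Proof.
  intros Hs.
  assert (H : Rabs (s ^ q) <= 1).
  { rewrite <- RPow_abs, <- (pow1 q).
    apply pow_incr; split; [apply Rabs_pos | apply Rabs_le; lra]. }
  apply Rabs_le_between in H; lra.
Qed.

Lemma pow_lt_1 (s : R) (q : nat) : Rabs s < 1 -> (1 <= q)%nat -> s ^ q < 1.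
Proof.
  intros Hs Hq.
  assert (H : Rabs s ^ q < 1) by (apply pow_lt_1_compat; [split; [apply Rabs_pos | lra] | lia]).
  rewrite RPow_abs in H. apply Rabs_def2 in H. lra.
Qed.

Lemma one_sub_pow_secant_mono (s s' : R) (q : nat) : 0 <= s <= s' -> s' <= 1 ->
  (1 - s ^ q) * (1 - s') <= (1 - s' ^ q) * (1 - s).
Proof.
  intros Hs Hs'. induction q as [|q IH]; simpl; [lra|].
  assert (Hq : 0 <= 1 - s' ^ q) by (pose proof (pow_between_m1_1 s' q); lra).
  assert (Hs1 : s * ((1 - s ^ q) * (1 - s')) <= s * ((1 - s' ^ q) * (1 - s)))
    by (apply Rmult_le_compat_l; lra).
  assert (Hs2 : s * ((1 - s' ^ q) * (1 - s)) <= s' * ((1 - s' ^ q) * (1 - s)))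
    by (apply Rmult_le_compat_r; [apply Rmult_le_pos|]; lra).
  nra.
Qed.

Lemma Series_ge0 (b : nat -> R) : (forall n, 0 <= b n) -> ex_series b -> 0 <= Series b.
Proof.
  intros Hb Hex.
  rewrite <- (Rmult_0_l (Series b)), <- Series_scal_l.
  apply Series_le; auto. intros n. specialize (Hb n). lra.
Qed.

Lemma Series_ge_term (b : nat -> R) (k : nat) :
  (forall n, 0 <= b n) -> ex_series b -> b k <= Series b.
Proof.
  intros Hb Hex.
  rewrite (Series_incr_n b (S k) ltac:(lia) Hex). simpl Init.Nat.pred.
  assert (Htail : 0 <= Series (fun j => b (S k + j)%nat))
    by (apply Series_ge0; [auto | apply ex_series_incr_n, Hex]).
  assert (Hpartial : b k <= sum_f_R0 b k).
  { destruct k as [|k]; simpl; [lra|].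
    pose proof (cond_pos_sum b k Hb). lra. }
  lra.
Qed.

Definition pgf (a : nat -> R) (s : R) : R := Series (fun q => a q * s ^ q).

Section GeneratingFunction.

Variable a : nat -> R.
Hypothesis a_ge0 : forall q, 0 <= a q.
Hypothesis a_sum1 : is_series a 1.

Lemma ex_series_pgf_terms (w : nat -> R) (B : R) :
  (forall q, Rabs (w q) <= B) -> ex_series (fun q => a q * w q).
Proof.
  intros Hw.
  apply (@ex_series_le R_AbsRing R_CompleteNormedModule _ (fun q => a q * B)).
  - intros q. change (Rabs (a q * w q) <= a q * B).
    rewrite Rabs_mult, (Rabs_pos_eq _ (a_ge0 q)).
    apply Rmult_le_compat_l; auto.
  - apply ex_series_scal_r. exists 1. exact a_sum1.
Qed.

Lemma pgf_gap (s : R) : -1 <= s <= 1 ->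
  1 - pgf a s = Series (fun q => a q * (1 - s ^ q)).
Proof.
  intros Hs. unfold pgf.
  rewrite (Series_ext (fun q => a q * (1 - s ^ q)) (fun q => a q - a q * s ^ q)) by (intros; ring).
  assert (Hex : ex_series (fun q => a q * s ^ q)).
  { apply (ex_series_pgf_terms _ 1). intros q.
    apply Rabs_le, pow_between_m1_1, Hs. }
  rewrite (Series_minus _ _ (ex_intro _ 1 a_sum1) Hex), (is_series_unique _ _ a_sum1).
  ring.
Qed.

Lemma ex_series_pgf_gap (s : R) : -1 <= s <= 1 ->
  ex_series (fun q => a q * (1 - s ^ q)).
Proof.
  intros Hs. apply (ex_series_pgf_terms _ 2). intros q.
  pose proof (pow_between_m1_1 s q Hs). apply Rabs_le. lra.
Qed.

Lemma pgf_gap_term_ge0 (s : R) (q : nat) : -1 <= s <= 1 -> 0 <= a q * (1 - s ^ q).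
Proof.
  intros Hs. pose proof (pow_between_m1_1 s q Hs).
  apply Rmult_le_pos; [apply a_ge0 | lra].
Qed.

Lemma pgf_at_1 : pgf a 1 = 1.
Proof.
  unfold pgf. rewrite (Series_ext _ a) by (intros; rewrite pow1; ring).
  apply is_series_unique, a_sum1.
Qed.

Lemma pgf_le1 (s : R) : -1 <= s <= 1 -> pgf a s <= 1.
Proof.
  intros Hs.
  assert (H : 0 <= 1 - pgf a s).
  { rewrite pgf_gap by exact Hs.
    apply Series_ge0; [intros; apply pgf_gap_term_ge0 | apply ex_series_pgf_gap]; exact Hs. }
  lra.
Qed.

Lemma pgf_lt1 (s : R) (q0 : nat) : (1 <= q0)%nat -> 0 < a q0 ->
  Rabs s < 1 -> pgf a s < 1.
Proof.
  intros Hq0 Ha Hs.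
  assert (Hs' : -1 <= s <= 1) by (apply Rabs_le_between; lra).
  assert (Hterm : 0 < a q0 * (1 - s ^ q0))
    by (pose proof (pow_lt_1 s q0 Hs Hq0); apply Rmult_lt_0_compat; lra).
  assert (Hle : a q0 * (1 - s ^ q0) <= 1 - pgf a s).
  { rewrite pgf_gap by exact Hs'.
    apply (Series_ge_term (fun q => a q * (1 - s ^ q))).
    - intros; apply pgf_gap_term_ge0, Hs'.
    - apply ex_series_pgf_gap, Hs'. }
  lra.
Qed.

Lemma pgf_gap_secant_mono (s s' : R) : 0 <= s <= s' -> s' <= 1 ->
  (1 - pgf a s) * (1 - s') <= (1 - pgf a s') * (1 - s).
Proof.
  intros Hs Hs'.
  rewrite !pgf_gap, <- !Series_scal_r by lra.
  apply Series_le.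
  - intros q. pose proof (pgf_gap_term_ge0 s q ltac:(lra)).
    pose proof (one_sub_pow_secant_mono s s' q Hs Hs'). pose proof (a_ge0 q).
    split; [apply Rmult_le_pos; lra|].
    rewrite !Rmult_assoc. apply Rmult_le_compat_l; lra.
  - apply ex_series_scal_r, ex_series_pgf_gap. lra.
Qed.

Lemma pgf_gap_le_slope (kp s : R) :
  filterlim (fun y => (pgf a y - pgf a 1) / (y - 1)) (at_left 1) (locally kp) ->
  0 <= s < 1 -> 1 - pgf a s <= kp * (1 - s).
Proof.
  intros Hkp Hs.
  set (slope := (1 - pgf a s) / (1 - s)).
  (* the secant slopes from 1 are nondecreasing, so their limit [kp] dominates [slope] *)
  assert (Hslope : slope <= kp).
  { apply (closed_filterlim_loc _ (fun z => slope <= z) kp Hkp); [| apply closed_ge].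
    exists (mkposreal (1 - s) ltac:(lra)). intros y Hy Hy1.
    change (Rabs (y - 1) < 1 - s) in Hy. apply Rabs_lt_between' in Hy.
    rewrite pgf_at_1.
    replace ((pgf a y - 1) / (y - 1)) with ((1 - pgf a y) / (1 - y)) by (field; lra).
    pose proof (pgf_gap_secant_mono s y ltac:(lra) ltac:(lra)).
    unfold slope.
    apply Rmult_le_reg_r with ((1 - s) * (1 - y)); [apply Rmult_lt_0_compat; lra|].
    replace ((1 - pgf a s) / (1 - s) * ((1 - s) * (1 - y))) with ((1 - pgf a s) * (1 - y))
      by (field; lra).
    replace ((1 - pgf a y) / (1 - y) * ((1 - s) * (1 - y))) with ((1 - pgf a y) * (1 - s))
      by (field; lra).
    exact H. }
  apply Rmult_le_reg_r with (/ (1 - s)); [apply Rinv_0_lt_compat; lra|].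
  replace (kp * (1 - s) * / (1 - s)) with kp by (field; lra).
  exact Hslope.
Qed.

Lemma pgf_gap_neg (s : R) : -1 <= s <= 0 ->
  1 - pgf a s <= (1 - pgf a 0) * (1 - s).
Proof.
  intros Hs.
  rewrite !pgf_gap, <- Series_scal_r by lra.
  apply Series_le.
  - intros q. split; [apply pgf_gap_term_ge0; lra|].
    rewrite Rmult_assoc. apply Rmult_le_compat_l; [apply a_ge0|].
    destruct q as [|q]; simpl; [lra|].
    pose proof (pow_between_m1_1 s q ltac:(lra)). nra.
  - apply ex_series_scal_r, ex_series_pgf_gap. lra.
Qed.

Lemma pgf_contraction (kp s : R) :
  filterlim (fun y => (pgf a y - pgf a 1) / (y - 1)) (at_left 1) (locally kp) ->
  -1 <= s <= 1 -> 1 - pgf a s <= kp * (1 - s).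
Proof.
  intros Hkp Hs.
  destruct (Req_dec s 1) as [->|Hs1]; [rewrite pgf_at_1; lra|].
  destruct (Rle_or_lt 0 s) as [Hs0|Hs0]; [apply pgf_gap_le_slope; auto; lra|].
  pose proof (pgf_gap_neg s ltac:(lra)).
  pose proof (pgf_gap_le_slope kp 0 Hkp ltac:(lra)).
  nra.
Qed.

End GeneratingFunction.

Lemma geometric_product_lower_bound (u : nat -> R) (b theta : R) :
  0 <= b <= 1 -> 0 <= theta < 1 -> 0 <= u O ->
  (forall n, u n * (1 - b * theta ^ n) <= u (S n)) ->
  forall n, u O * (1 - b / (1 - theta)) <= u n.
Proof.
  intros Hb Htheta Hu0 Hstep.
  set (B := b / (1 - theta)).
  assert (HB : b = B * (1 - theta)) by (unfold B; field; lra).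
  assert (HB0 : 0 <= B) by (unfold B; apply Rdiv_le_0_compat; lra).
  (* the product of the factors [1 - b theta^i], i < n, is at least [1 - B (1 - theta^n)] *)
  assert (Hprod : forall n, u O * (1 - B * (1 - theta ^ n)) <= u n).
  { induction n as [|n IH]; simpl; [lra|].
    pose proof (pow_between_m1_1 theta n ltac:(lra)).
    pose proof (pow_le theta n ltac:(lra)).
    specialize (Hstep n).
    assert (Hfac : 0 <= 1 - b * theta ^ n) by nra.
    assert (u O * (1 - B * (1 - theta ^ n)) * (1 - b * theta ^ n)
            <= u n * (1 - b * theta ^ n)) by (apply Rmult_le_compat_r; lra).
    assert (0 <= u O * (B * (1 - theta ^ n)) * (b * theta ^ n))
      by (apply Rmult_le_pos; [apply Rmult_le_pos|]; nra).
    assert (u O * b * theta ^ n = u O * B * (1 - theta) * theta ^ n) by (rewrite HB; ring).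
    nra. }
  intros n. specialize (Hprod n).
  pose proof (pow_le theta n ltac:(lra)).
  assert (0 <= u O * (B * theta ^ n)) by (apply Rmult_le_pos; nra).
  nra.
Qed.

Lemma Rpower_pow_base (x r : R) (L : nat) : 0 < x -> Rpower (x ^ L) r = Rpower x r ^ L.
Proof.
  intros Hx.
  rewrite <- (Rpower_pow L x Hx), <- (Rpower_pow L (Rpower x r)) by (apply exp_pos).
  rewrite !Rpower_mult, Rmult_comm. reflexivity.
Qed.

Lemma pow_eventually_lt (x e : R) : 0 <= x < 1 -> 0 < e ->
  exists N, forall n, (N <= n)%nat -> x ^ n < e.
Proof.
  intros Hx He.
  destruct (pow_lt_1_zero x ltac:(rewrite Rabs_pos_eq; lra) e He) as [N HN].
  exists N. intros n Hn. specialize (HN n Hn).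
  rewrite Rabs_pos_eq in HN by (apply pow_le; lra). exact HN.
Qed.

Definition rescaled_gap (k : R -> R) (kp t : R) (L : nat) : R :=
  / kp ^ L * (1 - Nat.iter L k t).

Section Iteration.

Variables (k : R -> R) (kp : R).
Hypothesis kp_pos : 0 < kp.
Hypothesis kp_lt1 : kp < 1.
Hypothesis k_le1 : forall s, -1 <= s <= 1 -> k s <= 1.
Hypothesis k_contraction : forall s, -1 <= s <= 1 -> 1 - k s <= kp * (1 - s).

Lemma k_range (s : R) : -1 <= s <= 1 -> -1 < k s <= 1.
Proof. intros Hs. pose proof (k_le1 s Hs). pose proof (k_contraction s Hs). nra. Qed.

Lemma k_at_1 : k 1 = 1.
Proof. pose proof (k_le1 1 ltac:(lra)). pose proof (k_contraction 1 ltac:(lra)). lra. Qed.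

Lemma iter_range (t : R) (L : nat) : -1 <= t <= 1 -> -1 <= Nat.iter L k t <= 1.
Proof.
  intros Ht. induction L as [|L IH]; simpl; [exact Ht|].
  pose proof (k_range _ IH). lra.
Qed.

Lemma iter_gap_le (t : R) (L : nat) : -1 <= t <= 1 -> 1 - Nat.iter L k t <= 2 * kp ^ L.
Proof.
  intros Ht. induction L as [|L IH]; simpl; [lra|].
  pose proof (k_contraction _ (iter_range t L Ht)). nra.
Qed.

Lemma rescaled_gap_succ (t : R) (L : nat) :
  rescaled_gap k kp t (S L) * kp = / kp ^ L * (1 - k (Nat.iter L k t)).
Proof.
  unfold rescaled_gap. simpl. field.
  split; [apply pow_nonzero|]; lra.
Qed.

Lemma rescaled_gap_ge0 (t : R) (L : nat) : -1 <= t <= 1 -> 0 <= rescaled_gap k kp t L.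
Proof.
  intros Ht. pose proof (iter_range t L Ht).
  apply Rmult_le_pos; [apply Rlt_le, Rinv_0_lt_compat, pow_lt | ]; lra.
Qed.

Lemma rescaled_gap_decr (t : R) (L : nat) : -1 <= t <= 1 ->
  rescaled_gap k kp t (S L) <= rescaled_gap k kp t L.
Proof.
  intros Ht.
  apply Rmult_le_reg_r with kp; [exact kp_pos|].
  rewrite rescaled_gap_succ. unfold rescaled_gap.
  pose proof (k_contraction _ (iter_range t L Ht)).
  assert (0 < / kp ^ L) by (apply Rinv_0_lt_compat, pow_lt; lra).
  nra.
Qed.

Lemma rescaled_gap_cvg (t : R) : -1 <= t <= 1 ->
  exists l, 0 <= l /\ is_lim_seq (rescaled_gap k kp t) l.
Proof.
  intros Ht.
  destruct (ex_finite_lim_seq_decr (rescaled_gap k kp t) 0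
              (fun L => rescaled_gap_decr t L Ht) (fun L => rescaled_gap_ge0 t L Ht))
    as [l Hl].
  exists l. split; [|exact Hl].
  apply (is_lim_seq_le (fun _ => 0) (rescaled_gap k kp t) 0 l); auto.
  - intros L. apply rescaled_gap_ge0, Ht.
  - apply is_lim_seq_const.
Qed.

Lemma rescaled_gap_lim_of_fixed (t l : R) : k t = 1 ->
  is_lim_seq (rescaled_gap k kp t) l -> l = 0.
Proof.
  intros Hkt Hl.
  assert (Hfix : forall L, Nat.iter (S L) k t = 1).
  { induction L as [|L IH]; [exact Hkt|]. simpl in *. rewrite IH. apply k_at_1. }
  assert (Hzero : is_lim_seq (rescaled_gap k kp t) 0).
  { apply (is_lim_seq_ext_loc (fun _ => 0)); [|apply is_lim_seq_const].
    exists 1%nat. intros [|L] HL; [lia|]. unfold rescaled_gap. rewrite Hfix. ring. }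
  pose proof (is_lim_seq_unique _ _ Hl) as E1.
  rewrite (is_lim_seq_unique _ _ Hzero) in E1. injection E1. auto.
Qed.

Section LowerBound.

Variables (C d rho : R).
Hypothesis C_ge0 : 0 <= C.
Hypothesis d_pos : 0 < d.
Hypothesis rho_gt1 : 1 < rho.
Hypothesis k_lower : forall s, -1 <= s -> 1 - d < s < 1 ->
  kp * (1 - s) - C * Rpower (1 - s) rho <= 1 - k s.
Hypothesis k_lt1 : forall s, -1 < s < 1 -> k s < 1.

Let theta := Rpower kp (rho - 1).
Let M := C / kp * Rpower 2 (rho - 1).

Lemma theta_between : 0 < theta < 1.
Proof.
  unfold theta, Rpower. split; [apply exp_pos|].
  assert (ln kp < 0) by (rewrite <- ln_1; apply ln_increasing; lra).
  apply (Rlt_le_trans _ (exp 0)); [apply exp_increasing; nra | rewrite exp_0; lra].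
Qed.

Lemma M_ge0 : 0 <= M.
Proof.
  unfold M. apply Rmult_le_pos; [apply Rdiv_le_0_compat; lra | apply Rlt_le, exp_pos].
Qed.

(* Near [1] the correction is [(1 - s)^rho <= (1 - s) (2 kp^L)^(rho - 1) = (1 - s) 2^(rho - 1) theta^L]. *)
Lemma k_gap_ge (s : R) (L : nat) : -1 <= s -> 1 - d < s < 1 -> 1 - s <= 2 * kp ^ L ->
  kp * (1 - s) * (1 - M * theta ^ L) <= 1 - k s.
Proof.
  intros Hs1 Hs Hgap.
  assert (Hpow : Rpower (1 - s) rho <= (1 - s) * (Rpower 2 (rho - 1) * theta ^ L)).
  { replace rho with (1 + (rho - 1)) at 1 by ring.
    rewrite Rpower_plus, Rpower_1 by lra.
    apply Rmult_le_compat_l; [lra|].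
    unfold theta. rewrite <- Rpower_pow_base, Rpower_mult_distr by (try apply pow_lt; lra).
    apply Rle_Rpower_l; lra. }
  pose proof (k_lower s Hs1 Hs).
  replace (kp * (1 - s) * (1 - M * theta ^ L))
    with (kp * (1 - s) - C * ((1 - s) * (Rpower 2 (rho - 1) * theta ^ L)))
    by (unfold M; field; lra).
  nra.
Qed.

Lemma rescaled_gap_succ_ge (t : R) (L : nat) : -1 <= t <= 1 ->
  2 * kp ^ L < d -> Nat.iter L k t < 1 ->
  rescaled_gap k kp t L * (1 - M * theta ^ L) <= rescaled_gap k kp t (S L).
Proof.
  intros Ht HL Hx.
  apply Rmult_le_reg_r with kp; [exact kp_pos|].
  rewrite rescaled_gap_succ. unfold rescaled_gap.
  pose proof (iter_range t L Ht). pose proof (iter_gap_le t L Ht).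
  pose proof (k_gap_ge (Nat.iter L k t) L ltac:(lra) ltac:(lra) ltac:(lra)).
  assert (0 < / kp ^ L) by (apply Rinv_0_lt_compat, pow_lt; lra).
  nra.
Qed.

Lemma iter_lt1 (t : R) (L : nat) : -1 <= t <= 1 -> k t <> 1 -> Nat.iter (S L) k t < 1.
Proof.
  intros Ht Hkt. induction L as [|L IH].
  - pose proof (k_le1 t Ht). simpl. lra.
  - pose proof (k_range _ (iter_range t L Ht)).
    change (Nat.iter (S (S L)) k t) with (k (Nat.iter (S L) k t)).
    apply k_lt1. simpl in *. lra.
Qed.

Lemma rescaled_gap_lim_pos (t l : R) : -1 <= t <= 1 -> k t <> 1 ->
  is_lim_seq (rescaled_gap k kp t) l -> 0 < l.
Proof.
  intros Ht Hkt Hl.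
  destruct theta_between as [Htheta0 Htheta1]. pose proof M_ge0.
  destruct (pow_eventually_lt kp (d / 2) ltac:(lra) ltac:(lra)) as [N1 HN1].
  destruct (pow_eventually_lt theta ((1 - theta) / (2 * (M + 1))) ltac:(lra))
    as [N2 HN2]; [apply Rdiv_lt_0_compat; lra|].
  set (L0 := S (Nat.max N1 N2)).
  set (b := M * theta ^ L0).
  assert (Hb : 0 <= b <= 1 /\ b / (1 - theta) <= / 2).
  { pose proof (pow_le theta L0 ltac:(lra)).
    assert (Hsmall : theta ^ L0 * (2 * (M + 1)) < 1 - theta).
    { apply Rlt_div_r; [lra|]. apply HN2. lia. }
    assert (M * theta ^ L0 <= (1 - theta) / 2) by nra.
    split; [split; [apply Rmult_le_pos|]; unfold b; lra|].
    apply Rle_div_l; [lra|]. unfold b. lra. }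
  set (u := fun n => rescaled_gap k kp t (L0 + n)).
  assert (Hu0 : 0 < u O).
  { unfold u, rescaled_gap. rewrite Nat.add_0_r.
    assert (Nat.iter L0 k t < 1) by (apply iter_lt1; assumption).
    apply Rmult_lt_0_compat; [apply Rinv_0_lt_compat, pow_lt|]; lra. }
  assert (Hstep : forall n, u n * (1 - b * theta ^ n) <= u (S n)).
  { intros n. unfold u, b. rewrite Rmult_assoc, <- pow_add, Nat.add_succ_r.
    apply rescaled_gap_succ_ge; [exact Ht| |].
    - assert (kp ^ (L0 + n) < d / 2) by (apply HN1; lia). lra.
    - apply iter_lt1; assumption. }
  pose proof (geometric_product_lower_bound u b theta ltac:(lra) ltac:(lra) ltac:(lra) Hstep)
    as Hlow.
  assert (Hle : Rbar_le (u O / 2) l).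
  { apply (is_lim_seq_le_loc (fun _ => u O / 2) (rescaled_gap k kp t));
      [| apply is_lim_seq_const | exact Hl].
    exists L0. intros n Hn. specialize (Hlow (n - L0)%nat).
    unfold u in Hlow at 2. replace (L0 + (n - L0))%nat with n in Hlow by lia.
    nra. }
  simpl in Hle. lra.
Qed.

End LowerBound.

End Iteration.

Lemma pgf_coeff_pos (J : nat -> R) (q : nat) : J q <> 0 -> 0 < J q ^ 2 / INR (fact q).
Proof.
  intros HJ. apply Rdiv_lt_0_compat; [apply pow2_gt_0, HJ | apply INR_fact_lt_0].
Qed.

Lemma asymptotic_lower_bound (f : R -> R) (kp c rho : R) :
  (forall eps : R, 0 < eps -> exists delta : R, 0 < delta /\
     forall t : R, -1 <= t -> 1 - delta < t < 1 ->
       Rabs ((1 - f t) - (kp * (1 - t) - c * Rpower (1 - t) rho))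
         <= eps * Rpower (1 - t) rho) ->
  exists d, 0 < d /\ forall s, -1 <= s -> 1 - d < s < 1 ->
    kp * (1 - s) - (Rabs c + 1) * Rpower (1 - s) rho <= 1 - f s.
Proof.
  intros Hasym. destruct (Hasym 1 Rlt_0_1) as [d [Hd Hnear]].
  exists d. split; [exact Hd|]. intros s Hs1 Hs.
  pose proof (Hnear s Hs1 Hs) as Hs'. apply Rabs_le_between in Hs'.
  assert (0 <= Rpower (1 - s) rho) by apply Rlt_le, exp_pos.
  pose proof (Rle_abs c). nra.
Qed.

Theorem lemma3p6 (J : nat -> R) (kp : R)
  (HJinf : forall N : nat, exists q : nat, (N <= q)%nat /\ J q <> 0)
  (Hsum : ex_series (fun q : nat => Rabs (J (S q)) / INR (fact q)))
  (Hk1 : is_series (fun q : nat => J q ^ 2 / INR (fact q)) 1)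
  (Hkp_def : filterlim (fun s => (kappa J s - kappa J 1) / (s - 1))
                       (at_left 1) (locally kp))
  (Hkp : kp < 1) :
  (forall t : R, -1 <= t <= 1 ->
     exists l : R, 0 <= l /\
       is_lim_seq (fun L : nat => / kp ^ L * (1 - kappa_iter J L t)) l)
  /\
  (forall c rho : R, c <> 0 -> 1 < rho ->
     (forall eps : R, 0 < eps -> exists delta : R, 0 < delta /\
        forall t : R, -1 <= t -> 1 - delta < t < 1 ->
          Rabs ((1 - kappa J t) - (kp * (1 - t) - c * Rpower (1 - t) rho))
            <= eps * Rpower (1 - t) rho) ->
     forall t : R, -1 <= t <= 1 ->
     forall l : R,
       is_lim_seq (fun L : nat => / kp ^ L * (1 - kappa_iter J L t)) l ->
       (l = 0 <-> kappa J t = 1)).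
Proof.
  set (a := fun q => J q ^ 2 / INR (fact q)).
  assert (a_ge0 : forall q, 0 <= a q)
    by (intros q; apply Rdiv_le_0_compat; [apply pow2_ge_0 | apply INR_fact_lt_0]).
  pose proof (pgf_le1 a a_ge0 Hk1) as k_le1.
  pose proof (fun s => pgf_contraction a a_ge0 Hk1 kp s Hkp_def) as k_contraction.
  destruct (HJinf 1%nat) as [q0 [Hq0 HJq0]].
  pose proof (fun s => pgf_lt1 a a_ge0 Hk1 s q0 Hq0 (pgf_coeff_pos J q0 HJq0)) as k_lt1.
  assert (kp_pos : 0 < kp).
  { pose proof (k_contraction 0 ltac:(lra)). pose proof (k_lt1 0 ltac:(rewrite Rabs_R0; lra)).
    lra. }
  split.
  - intros t Ht. exact (rescaled_gap_cvg (kappa J) kp kp_pos Hkp k_le1 k_contraction t Ht).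
  - intros c rho _ Hrho Hasym t Ht l Hl.
    destruct (asymptotic_lower_bound (kappa J) kp c rho Hasym) as [d [Hd k_lower]].
    split.
    + intros ->. destruct (Req_dec (kappa J t) 1) as [Hkt|Hkt]; [exact Hkt|].
      exfalso. refine (Rlt_irrefl 0 (rescaled_gap_lim_pos (kappa J) kp kp_pos Hkp k_le1
        k_contraction (Rabs c + 1) d rho _ Hd Hrho k_lower _ t 0 Ht Hkt Hl)).
      * pose proof (Rabs_pos c). lra.
      * intros s Hs. apply k_lt1, Rabs_def1; lra.
    + intros Hkt. exact (rescaled_gap_lim_of_fixed (kappa J) kp k_le1 k_contraction t l Hkt Hl).
Qed.
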